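(* For every formula $\varphi$ of $\mathcal L^{\bigcirc}_\square$: $\varphi$ is derivable in $\mathbf{GLC}$ if and only if $\varphi$ is valid, with respect to the $d$-semantics, on every dynamic topological system $\langle X,\tau,f\rangle$ with $X$ finite and $\langle X,\tau\rangle$ scattered.
   Context: Fix a non-empty set $\mathsf{PV}$ of propositional variables. The language $\mathcal L^{\bigcirc}_\square$ is given by $\varphi::= p\mid \varphi\wedge\varphi\mid\neg\varphi\mid\square\varphi\mid\bigcirc\varphi$ with $p\in\mathsf{PV}$. Axioms and rules: Taut; K: $\square(\varphi\to\psi)\to(\square\varphi\to\square\psi)$; 4: $\square\varphi\to\square\square\varphi$; L: $\square(\square\varphi\to\varphi)\to\square\varphi$; ${\rm Next}_\neg$: $\neg\bigcirc\varphi\leftrightarrow\bigcirc\neg\varphi$; ${\rm Next}_\wedge$: $\bigcirc(\varphi\wedge\psi)\leftrightarrow\bigcirc\varphi\wedge\bigcirc\psi$; C: $\bigcirc\varphi\wedge\bigcirc\square\varphi\to\square\bigcirc\varphi$; rules modus ponens, ${\rm Nec}_\square$, ${\rm Nec}_\bigcirc$. $\mathbf{GLC}$ is axiomatised by Taut, K, 4, L, ${\rm Next}_\neg$, ${\rm Next}_\wedge$, C and closed under these rules. A dynamic topological system (DTS) is $\langle X,\tau,f\rangle$ with $f\colon X\to X$ continuous. The Cantor derivative $d(A)$ of $A\subseteq X$ is the set of $x$ in the closure of $A\setminus\{x\}$. A space is scattered if for every $S\subseteq X$, $S\subseteq d(S)$ implies $S=\varnothing$. Under a valuation $\nu\colon\mathsf{PV}\to\wp(X)$: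 $\|p\|=\nu(p)$, $\|\neg\varphi\|=X\setminus\|\varphi\|$, $\|\varphi\wedge\psi\|=\|\varphi\|\cap\|\psi\|$, $\|\square\varphi\|=X\setminus d(\|\neg\varphi\|)$, $\|\bigcirc\varphi\|=f^{-1}(\|\varphi\|)$. Valid on a DTS means truth set $X$ under every valuation. *)

From HB Require Import structures.
From mathcomp Require Import all_boot all_order.
From mathcomp Require Import boolp classical_sets functions cardinality topology.

Set Implicit Arguments.
Unset Strict Implicit.
Unset Printing Implicit Defensive.

Local Open Scope classical_set_scope.

Inductive formula (PV : Type) : Type :=
| Var : PV -> formula PV
| And : formula PV -> formula PV -> formula PV
| Neg : formula PV -> formula PV
| Box : formula PV -> formula PV
| Next : formula PV -> formula PV.

Arguments Var {PV}.
Arguments And {PV}.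
Arguments Neg {PV}.
Arguments Box {PV}.
Arguments Next {PV}.

Definition Imp {PV} (a b : formula PV) : formula PV := Neg (And a (Neg b)).
Definition Iff {PV} (a b : formula PV) : formula PV := And (Imp a b) (Imp b a).

Fixpoint beval {PV} (v : formula PV -> bool) (phi : formula PV) : bool :=
  match phi with
  | And a b => beval v a && beval v b
  | Neg a => ~~ beval v a
  | _ => v phi
  end.

(* Taut: all (substitution instances of) classical propositional tautologies. *)
Definition tautology {PV} (phi : formula PV) : Prop :=
  forall v : formula PV -> bool, beval v phi = true.

Inductive GLC {PV : Type} : formula PV -> Prop :=
| ax_taut phi : tautology phi -> GLC phi
| ax_K phi psi : GLC (Imp (Box (Imp phi psi)) (Imp (Box phi) (Box psi)))
| ax_4 phi : GLC (Imp (Box phi) (Box (Box phi)))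
| ax_L phi : GLC (Imp (Box (Imp (Box phi) phi)) (Box phi))
| ax_NextNeg phi : GLC (Iff (Neg (Next phi)) (Next (Neg phi)))
| ax_NextAnd phi psi : GLC (Iff (Next (And phi psi)) (And (Next phi) (Next psi)))
| ax_C phi : GLC (Imp (And (Next phi) (Next (Box phi))) (Box (Next phi)))
| rule_MP phi psi : GLC (Imp phi psi) -> GLC phi -> GLC psi
| rule_NecBox phi : GLC phi -> GLC (Box phi)
| rule_NecNext phi : GLC phi -> GLC (Next phi).

Definition cderiv {X : topologicalType} (A : set X) : set X :=
  [set x | closure (A `\ x) x].

Definition scattered (X : topologicalType) : Prop :=
  forall S : set X, S `<=` cderiv S -> S = set0.

Fixpoint truth {PV} {X : topologicalType} (f : X -> X) (nu : PV -> set X)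
    (phi : formula PV) : set X :=
  match phi with
  | Var p => nu p
  | And a b => truth f nu a `&` truth f nu b
  | Neg a => ~` truth f nu a
  | Box a => ~` cderiv (~` truth f nu a)
  | Next a => f @^-1` truth f nu a
  end.

Definition valid_on {PV} {X : topologicalType} (f : X -> X) (phi : formula PV) : Prop :=
  forall nu : PV -> set X, truth f nu phi = setT.

From HB Require Import structures.
From mathcomp Require Import all_boot all_order.
From mathcomp Require Import boolp classical_sets functions cardinality topology.
From mathcomp Require Import zify.
From Stdlib Require List.

Set Implicit Arguments.
Unset Strict Implicit.
Unset Printing Implicit Defensive.

(* Soundness is a direct check: in a scattered space the Cantor derivative
   validates axioms 4 and L ([cderiv_trans], [cderivL]), and continuity of f
   validates axiom C.

   Completeness goes through a finite canonical system for a non-theorem phi.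
   The formulas of the closure of phi that a world must decide at time k form
   the k-th [layer]; a [ktype] is a consistent complete choice of truth values
   on a layer.  The existence lemma [successor_exists] turns a k-type refuting
   []psi into an accessible k-type refuting psi (Loeb) whose futures are tied
   to those of the original type (iterated axiom C).  Worlds are k-types with
   a vector of heights ([wf_state]); they are ordered by [acc] and carry the
   Alexandrov topology of this order ([upsets]), where the derivative of A is
   the set of points seeing A ([cderiv_upsets]).  The dynamics advances time
   and preserves the order (continuity), the heights are bounded and grow
   along [acc] (scatteredness), a finite coding gives finiteness, and the
   [truth_lemma] shows that the world built from a type refuting phi
   refutes phi. *)

Definition Or {PV} (a b : formula PV) : formula PV := Neg (And (Neg a) (Neg b)).
Definition Dia {PV} (a : formula PV) : formula PV := Neg (Box (Neg a)).

Ltac taut := let v := fresh "v" in move=> v; rewrite /Imp /Iff /Or /Dia /=;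
  repeat match goal with
  | |- context [beval v ?a] => case: (beval v a)
  | |- context [v ?a] => case: (v a) end; done.

Section Derivations.
Variables (PV : Type) (p0 : PV).
Implicit Types a b c d e : formula PV.

Definition nexts (i : nat) a := iter i (@Next PV) a.
Definition top : formula PV := Imp (Var p0) (Var p0).
Definition bigAnd (l : list (formula PV)) := foldr And top l.

Lemma taut_mp a b : tautology (Imp a b) -> GLC a -> GLC b.
Proof. by move=> T Ha; apply: rule_MP (ax_taut T) Ha. Qed.

Lemma taut_mp2 a b c : tautology (Imp a (Imp b c)) -> GLC a -> GLC b -> GLC c.
Proof. by move=> T Ha Hb; apply: rule_MP (rule_MP (ax_taut T) Ha) Hb. Qed.

Lemma taut_mp3 a b c d : tautology (Imp a (Imp b (Imp c d))) ->
  GLC a -> GLC b -> GLC c -> GLC d.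
Proof. by move=> T Ha Hb Hc; apply: rule_MP (taut_mp2 T Ha Hb) Hc. Qed.

Lemma taut_mp4 a b c d e : tautology (Imp a (Imp b (Imp c (Imp d e)))) ->
  GLC a -> GLC b -> GLC c -> GLC d -> GLC e.
Proof. by move=> T Ha Hb Hc Hd; apply: rule_MP (taut_mp3 T Ha Hb Hc) Hd. Qed.

Lemma imp_refl a : GLC (Imp a a).
Proof. by apply: ax_taut; taut. Qed.

Lemma imp_trans a b c : GLC (Imp a b) -> GLC (Imp b c) -> GLC (Imp a c).
Proof. by apply: taut_mp2; taut. Qed.

Lemma and_intro c a b : GLC (Imp c a) -> GLC (Imp c b) -> GLC (Imp c (And a b)).
Proof. by apply: taut_mp2; taut. Qed.

Lemma and_el a b : GLC (Imp (And a b) a).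
Proof. by apply: ax_taut; taut. Qed.

Lemma and_er a b : GLC (Imp (And a b) b).
Proof. by apply: ax_taut; taut. Qed.

Lemma box_mono a b : GLC (Imp a b) -> GLC (Imp (Box a) (Box b)).
Proof. by move=> H; apply: rule_MP (ax_K _ _) (rule_NecBox H). Qed.

Lemma box_and a b : GLC (Imp (And (Box a) (Box b)) (Box (And a b))).
Proof.
have Ha : GLC (Imp (Box a) (Box (Imp b (And a b)))) by apply: box_mono; apply: ax_taut; taut.
by apply: taut_mp2 Ha (ax_K b (And a b)); taut.
Qed.

Lemma next_mono a b : GLC (Imp a b) -> GLC (Imp (Next a) (Next b)).
Proof.
move=> H; apply: (taut_mp4 _ (rule_NecNext H) (ax_NextNeg (And a (Neg b)))
  (ax_NextAnd a (Neg b)) (ax_NextNeg b)); taut.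
Qed.

Lemma next_neg1 a : GLC (Imp (Next (Neg a)) (Neg (Next a))).
Proof. by apply: (taut_mp _ (ax_NextNeg a)); taut. Qed.

Lemma next_neg2 a : GLC (Imp (Neg (Next a)) (Next (Neg a))).
Proof. by apply: (taut_mp _ (ax_NextNeg a)); taut. Qed.

Lemma next_and1 a b : GLC (Imp (And (Next a) (Next b)) (Next (And a b))).
Proof. by apply: (taut_mp _ (ax_NextAnd a b)); taut. Qed.

Lemma next_and2 a b : GLC (Imp (Next (And a b)) (And (Next a) (Next b))).
Proof. by apply: (taut_mp _ (ax_NextAnd a b)); taut. Qed.

Lemma nextsSr i a : nexts i.+1 a = nexts i (Next a). Proof. exact: iterSr. Qed.
Lemma nextsD i j a : nexts (i + j) a = nexts i (nexts j a). Proof. exact: iterD. Qed.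

Lemma nexts_nec i a : GLC a -> GLC (nexts i a).
Proof. by elim: i => [//|i IH] H; apply: rule_NecNext; apply: IH. Qed.

Lemma nexts_mono i a b : GLC (Imp a b) -> GLC (Imp (nexts i a) (nexts i b)).
Proof. by elim: i => [//|i IH] H; apply: next_mono; apply: IH. Qed.

Lemma nexts_neg1 i a : GLC (Imp (nexts i (Neg a)) (Neg (nexts i a))).
Proof.
elim: i => [|i IH]; first exact: imp_refl.
exact: imp_trans (next_mono IH) (next_neg1 _).
Qed.

Lemma nexts_neg2 i a : GLC (Imp (Neg (nexts i a)) (nexts i (Neg a))).
Proof.
elim: i => [|i IH]; first exact: imp_refl.
exact: imp_trans (next_neg2 _) (next_mono IH).
Qed.

Lemma nexts_and1 i a b : GLC (Imp (And (nexts i a) (nexts i b)) (nexts i (And a b))).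
Proof.
elim: i => [|i IH]; first exact: imp_refl.
exact: imp_trans (next_and1 _ _) (next_mono IH).
Qed.

Lemma nexts_and2 i a b : GLC (Imp (nexts i (And a b)) (And (nexts i a) (nexts i b))).
Proof.
elim: i => [|i IH]; first exact: imp_refl.
exact: imp_trans (next_mono IH) (next_and2 _ _).
Qed.

Lemma nexts_or i a b : GLC (Imp (nexts i (Or a b)) (Or (nexts i a) (nexts i b))).
Proof.
apply: (taut_mp4 _ (nexts_neg1 i (And (Neg a) (Neg b))) (nexts_and1 i (Neg a) (Neg b))
  (nexts_neg2 i a) (nexts_neg2 i b)); taut.
Qed.

Lemma nexts_C i a : GLC (Imp (And (nexts i a) (nexts i (Box a))) (Box (nexts i a))).
Proof.
elim: i a => [|i IH] a; first by apply: ax_taut; taut.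
rewrite !nextsSr.
have CNext : GLC (Imp (And (nexts i (Next a)) (nexts i (Next (Box a))))
                      (nexts i (Box (Next a)))).
  by apply: imp_trans (nexts_and1 _ _ _) _; apply: nexts_mono; exact: ax_C.
by apply: (taut_mp2 _ CNext (IH (Next a))); taut.
Qed.

Lemma bigAnd_in l x : List.In x l -> GLC (Imp (bigAnd l) x).
Proof.
elim: l => [//|y l IH] /= [<-|/IH H]; first exact: and_el.
exact: imp_trans (and_er _ _) H.
Qed.

Lemma bigAnd_intro c l : (forall x, List.In x l -> GLC (Imp c x)) -> GLC (Imp c (bigAnd l)).
Proof.
elim: l => [|y l IH] H /=; first by apply: (taut_mp _ (imp_refl (Var p0))); taut.
by apply: and_intro; [apply: H; left | apply: IH => x Hx; apply: H; right].
Qed.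

Lemma box_bigAnd_intro c l : (forall x, List.In x l -> GLC (Imp c (Box x))) ->
  GLC (Imp c (Box (bigAnd l))).
Proof.
elim: l => [|y l IH] H /=; first by apply: (taut_mp _ (rule_NecBox (imp_refl (Var p0)))); taut.
apply: imp_trans (box_and _ _); apply: and_intro; first by apply: H; left.
by apply: IH => x Hx; apply: H; right.
Qed.

Lemma nexts_bigAnd_intro i c l : (forall x, List.In x l -> GLC (Imp c (nexts i x))) ->
  GLC (Imp c (nexts i (bigAnd l))).
Proof.
elim: l => [|y l IH] H /=; first by apply: (taut_mp _ (nexts_nec i (imp_refl (Var p0)))); taut.
apply: imp_trans (nexts_and1 _ _ _); apply: and_intro; first by apply: H; left.
by apply: IH => x Hx; apply: H; right.
Qed.

Definition Con a := ~ GLC (Neg a).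

Lemma con_imp a b : Con a -> GLC (Imp a b) -> Con b.
Proof. by move=> Ca H Hb; apply: Ca; apply: (taut_mp2 _ H Hb); taut. Qed.

Lemma con_dia a : Con (Dia a) -> Con a.
Proof. by move=> C H; apply: C; apply: (taut_mp _ (rule_NecBox H)); taut. Qed.

Lemma con_nexts i a : Con (nexts i a) -> Con a.
Proof. by move=> C H; apply: C; apply: (taut_mp2 _ (nexts_nec i H) (nexts_neg1 i a)); taut. Qed.

(* Two modal facts behind the existence of successors:
   Loeb's axiom gives a "last" ~p-world, and [] distributes over <>. *)
Lemma lob_dia c p :
  GLC (Imp (And (Box c) (Neg (Box p))) (Dia (And c (And (Neg p) (Box p))))).
Proof.
set g := And c (And (Neg p) (Box p)).
have Hc : GLC (Imp (Box c) (Box (Imp (Neg g) (Imp (Box p) p)))).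
  by apply: box_mono; apply: ax_taut; rewrite /g; taut.
by apply: (taut_mp3 _ Hc (ax_K (Neg g) (Imp (Box p) p)) (ax_L p)); taut.
Qed.

Lemma box_dia_and b g : GLC (Imp (And (Box b) (Dia g)) (Dia (And g b))).
Proof.
have Hb : GLC (Imp (Box b) (Box (Imp (Neg (And g b)) (Neg g)))).
  by apply: box_mono; apply: ax_taut; taut.
by apply: (taut_mp2 _ Hb (ax_K (Neg (And g b)) (Neg g))); taut.
Qed.

Definition lit (G : formula PV -> bool) a := if G a then a else Neg a.

Lemma lindenbaum (l : list (formula PV)) a : Con a ->
  exists G : formula PV -> bool, Con (And a (bigAnd (List.map (lit G) l))).
Proof.
move=> Ca.
suff [b [Hba Cb Hd]] : exists b, [/\ GLC (Imp b a), Con b &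
    forall t, List.In t l -> GLC (Imp b t) \/ GLC (Imp b (Neg t))].
  exists (fun t => `[< GLC (Imp b t) >]); apply: con_imp Cb _.
  apply: and_intro => //; apply: bigAnd_intro => x /List.in_map_iff [t [<- Ht]].
  by rewrite /lit; case: asboolP => // Hn; case: (Hd t Ht).
elim: l a Ca => [|t l IH] a Ca; first by exists a; split => //; exact: imp_refl.
have [Cat|NCat] := pselect (Con (And a t)).
- have [b [Hba Cb Hd]] := IH _ Cat.
  exists b; split => //; first exact: imp_trans Hba (and_el _ _).
  move=> x /= [<-|Hx]; last exact: Hd.
  by left; apply: imp_trans Hba (and_er _ _).
- have Cant : Con (And a (Neg t)).
    by move=> H; apply: Ca; apply: (taut_mp2 _ (contrapT NCat) H); taut.
  have [b [Hba Cb Hd]] := IH _ Cant.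
  exists b; split => //; first exact: imp_trans Hba (and_el _ _).
  move=> x /= [<-|Hx]; last exact: Hd.
  by right; apply: imp_trans Hba (and_er _ _).
Qed.

End Derivations.

Local Open Scope classical_set_scope.

Section Derivative.
Variable X : topologicalType.
Implicit Types A B : set X.

Lemma cderivP A x :
  cderiv A x <-> forall U, open U -> U x -> exists y, [/\ U y, A y & y <> x].
Proof.
rewrite /cderiv /closure /=; split.
- move=> H U oU Ux; have : nbhs x U by rewrite nbhsE; exists U.
  by move=> /H [y [[Ay nyx] Uy]]; exists y.
- move=> H B; rewrite nbhsE => -[U [oU Ux] UB].
  by have [y [Uy Ay yx]] := H U oU Ux; exists y; split => //; apply: UB.
Qed.

Lemma ncderivP A x :
  ~ cderiv A x <-> exists U, [/\ open U, U x & forall y, U y -> y <> x -> ~ A y].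
Proof.
split.
- move=> H; apply: contrapT => H2; apply: H; apply/cderivP => U oU Ux.
  apply: contrapT => H3; apply: H2; exists U; split => // y Uy yx Ay.
  by apply: H3; exists y.
- move=> [U [oU Ux HU]] /cderivP /(_ U oU Ux) [y [Uy Ay yx]].
  exact: (HU y Uy yx Ay).
Qed.

Lemma cderivS A B : A `<=` B -> cderiv A `<=` cderiv B.
Proof.
move=> AB x /cderivP H; apply/cderivP => U oU Ux.
by have [y [Uy Ay yx]] := H U oU Ux; exists y; split => //; apply: AB.
Qed.

Lemma cderivU A B x : cderiv (A `|` B) x -> cderiv A x \/ cderiv B x.
Proof.
move=> H; apply: contrapT => /not_orP [/ncderivP [U [oU Ux HU]] /ncderivP [V [oV Vx HV]]].
move/cderivP: H => /(_ (U `&` V) (openI oU oV) (conj Ux Vx)) [y [[Uy Vy] ABy yx]].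
by case: ABy => [/(HU y Uy yx)|/(HV y Vy yx)].
Qed.

Lemma cderiv_trans A x : scattered X -> cderiv (cderiv A) x -> cderiv A x.
Proof.
move=> sc H; apply: contrapT => /ncderivP [U [oU Ux HU]].
pose T := [set z | U z /\ (forall W, open W -> W z -> W x)].
suff : T = set0 by move=> T0; have : T x by []; rewrite T0.
apply: sc => z [Uz Hz]; apply/cderivP => W oW Wz.
have [zx|zx] := pselect (z = x); last by exists x; split => //; [apply: Hz | move=> E; apply: zx].
subst z.
move/cderivP: H => /(_ (W `&` U) (openI oW oU) (conj Wz Ux)) [y [[Wy Uy] dAy yx]].
exists y; split => //; split => // W' oW' W'y.
move/cderivP: dAy => /(_ (W' `&` U) (openI oW' oU) (conj W'y Uy)) [w [[W'w Uw] Aw wy]].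
have [wx|wx] := pselect (w = x); first by rewrite -wx.
by case: (HU w Uw wx Aw).
Qed.

Lemma cderivL A x : scattered X -> cderiv A x -> cderiv (A `&` ~` cderiv A) x.
Proof.
move=> sc H; apply: contrapT => /ncderivP [U [oU Ux HU]].
suff UA0 : U `&` A = set0.
  move/cderivP: H => /(_ U oU Ux) [y [Uy Ay _]].
  by have : (U `&` A) y by []; rewrite UA0.
apply: sc => z [Uz Az]; apply: contrapT => /ncderivP [W [oW Wz HW]].
have ndz : ~ cderiv A z.
  apply/ncderivP; exists (W `&` U); split => //; first exact: openI.
  by move=> y [Wy Uy] yz Ay; apply: (HW y Wy yz).
have [zx|zx] := pselect (z = x); first by subst z.
by apply: (HU z Uz zx).
Qed.
End Derivative.

Section Soundness.
Variables (PV : Type) (X : topologicalType) (f : X -> X) (nu : PV -> set X).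

(* Truth commutes with Boolean evaluation, so tautologies hold everywhere. *)
Lemma truth_taut (phi : formula PV) x : tautology phi -> truth f nu phi x.
Proof.
move=> /(_ (fun psi => `[< truth f nu psi x >])) H.
suff E psi : beval (fun psi => `[< truth f nu psi x >]) psi = `[< truth f nu psi x >].
  by move: H; rewrite E => /asboolP.
elim: psi => [p|a Ha b Hb|a Ha|a Ha|a Ha] //=.
- by rewrite Ha Hb asbool_and.
- by rewrite Ha asbool_neg.
Qed.

Lemma soundness (phi : formula PV) : continuous f -> scattered X -> GLC phi ->
  forall x, truth f nu phi x.
Proof.
move=> cf sc; elim => {phi}.
- by move=> phi Ht x; apply: truth_taut.
- move=> a b x /= [H1 /contrapT [H2 H3]]; apply: H3 => Hb.
  have /cderivU [Hab|Ha] : cderiv (~` truth f nu (Imp a b) `|` ~` truth f nu a) x.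
    apply: cderivS Hb => y /= nb; apply: contrapT => /not_orP [/contrapT Hy /contrapT Ay].
    by apply: Hy.
  + by apply: H1.
  + by apply: H2.
- move=> a x /= [H1 H2]; apply: H2 => H3; apply: H1; apply: cderiv_trans => //.
  by apply: cderivS H3 => y /= /contrapT.
- move=> a x /= [H1 H2]; apply: H2 => H3; apply: H1.
  by have := cderivL sc H3; apply: cderivS => y /= [Ny Hy] H; apply: H.
- by move=> a x /=; tauto.
- by move=> a b x /=; tauto.
- move=> a x /= [[H1 H2] H3]; apply: H3 => H4.
  move/ncderivP: H2 => [U [oU Ufx HU]].
  move/cderivP: H4 => /(_ (f @^-1` U) ((proj1 (continuousP f)) cf U oU) Ufx) [y [Uy Ny yx]].
  apply: Ny; have [E|E] := pselect (f y = f x); first by rewrite /= E.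
  by apply: contrapT => Hy; apply: (HU (f y) Uy E).
- by move=> a b _ Hab _ Ha x; have := Hab x => /= H; apply: contrapT => Hb; apply: H.
- by move=> a _ Ha x /= /cderivP /(_ setT openT I) [y [_ Hy _]]; apply: Hy.
- by move=> a _ Ha x /=.
Qed.
End Soundness.

(* The Alexandrov topology of a relation R on T: open sets are the R-upsets. *)
Definition upsets {T : Type} (R : T -> T -> Prop) : Type := T.
HB.instance Definition _ (T : Type) (R : T -> T -> Prop) := gen_eqMixin (upsets R).
HB.instance Definition _ (T : Type) (R : T -> T -> Prop) := gen_choiceMixin (upsets R).

Section Upsets.
Variables (T : Type) (R : T -> T -> Prop).

Definition upset (A : set (upsets R)) := forall u v, R u v -> A u -> A v.

Lemma upsetT : upset setT. Proof. by []. Qed.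

Lemma upsetI : setI_closed upset.
Proof. by move=> A B oA oB u v luv [Au Bu]; split; [apply: oA Au | apply: oB Bu]. Qed.

Lemma upsetU (I : Type) (F : I -> set (upsets R)) :
  (forall i, upset (F i)) -> upset (\bigcup_i F i).
Proof. by move=> H u v luv [i _ Fu]; exists i => //; apply: H Fu. Qed.
End Upsets.

HB.instance Definition _ (T : Type) (R : T -> T -> Prop) :=
  isOpenTopological.Build (upsets R) (@upsetT T R) (@upsetI T R) (@upsetU T R).

Section UpsetTopology.
Variables (T : Type) (R : T -> T -> Prop).
Local Notation X := (upsets R).

Lemma open_upsetE (A : set X) : open A <-> upset A.
Proof.
rewrite openE /interior; split => [H u v luv Au|H u Au].
- by have [B [oB Bu BA]] := H u Au; apply: BA; exact: oB Bu.
- by exists A; split.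
Qed.

Lemma cderiv_upsets (A : set X) w : (forall x y z, R x y -> R y z -> R x z) ->
  (forall x, ~ R x x) -> cderiv A w <-> exists v, R w v /\ A v.
Proof.
move=> Rtr Rirr; split.
- move=> /cderivP H.
  have oU : open [set v | v = w \/ R w v].
    by apply/open_upsetE => u v luv [<-|lwu]; right => //; exact: Rtr lwu luv.
  by have [y [[->|lwy] Ay yw]] := H _ oU (or_introl erefl); last exists y.
- move=> [v [lwv Av]]; apply/cderivP => U /open_upsetE oU Uw.
  by exists v; split => //; [exact: oU lwv Uw | move=> E; subst v; exact: Rirr lwv].
Qed.

Lemma continuous_upsets (f : X -> X) :
  (forall x y, R x y -> f x = f y \/ R (f x) (f y)) -> continuous f.
Proof.
move=> Hf; apply/continuousP => A /open_upsetE oA; apply/open_upsetE => u v luv /= Au.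
by case: (Hf u v luv) => [<-//|fuv]; exact: oA fuv Au.
Qed.

Lemma scattered_upsets (ht : T -> nat) (B : nat) :
  (forall x, ht x <= B)%N ->
  (forall x y, R x y -> ht x < ht y)%N ->
  (forall x y z, R x y -> R y z -> R x z) -> scattered X.
Proof.
move=> hB hR Rtr S HS; have Rirr x : ~ R x x by move/hR; rewrite ltnn.
apply/seteqP; split => // w Sw; exfalso.
suff noS m (u : X) : (B - ht u <= m)%N -> ~ S u by apply: (noS _ w (leqnn _)).
elim: m u => [|m IH] u Hu Su;
  have [v [luv Sv]] := proj1 (cderiv_upsets S u Rtr Rirr) (HS u Su);
  have := hB v; have := hR u v luv.
- by move: Hu; lia.
- by move=> Huv Hv; apply: (IH v) => //; move: Hu Huv Hv; lia.
Qed.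
End UpsetTopology.

Lemma finite_setT_inj (T : Type) (F : finType) (e : T -> F) : injective e ->
  finite_set [set: T].
Proof.
move=> ie; rewrite -(preimage_setT e).
by apply: finite_preimage; [move=> u v _ _; apply: ie | apply: finite_finset].
Qed.

Section Layers.
Variables (PV : Type) (phi : formula PV).
Implicit Types a b c s t : formula PV.

Fixpoint odepth t : nat := match t with
  | Var _ => 0 | And a b => maxn (odepth a) (odepth b) | Neg a => odepth a
  | Box a => odepth a | Next a => (odepth a).+1 end.
Fixpoint base t := match t with Next a => base a | _ => t end.
Fixpoint lead t : nat := match t with Next a => (lead a).+1 | _ => 0 end.
Fixpoint sub t : list (formula PV) := t :: match t with
  | Var _ => nil | And a b => List.app (sub a) (sub b)
  | Neg a => sub a | Box a => sub a | Next a => sub a end.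

Definition depth := odepth phi.

(* A world of the canonical model at
   time k decides exactly the formulas of layer k. *)
Definition layer k t := (k + odepth t <= depth)%N /\ List.In (base t) (sub phi).

Lemma odepth_nexts j t : odepth (nexts j t) = j + odepth t.
Proof. by elim: j => //= j ->. Qed.

Lemma base_nexts j t : base (nexts j t) = base t.
Proof. by elim: j. Qed.

Lemma nexts_lead_base t : nexts (lead t) (base t) = t.
Proof. by elim: t => //= a IH; rewrite -[in RHS]IH. Qed.

Lemma lead_le t : (lead t <= odepth t)%N.
Proof. by elim: t => //= a IH. Qed.

Lemma sub_refl t : List.In t (sub t).
Proof. by case: t => * /=; left. Qed.

Lemma sub_trans a b c : List.In b (sub a) -> List.In c (sub b) -> List.In c (sub a).
Proof.
elim: a => [p|a1 IH1 a2 IH2|a1 IH1|a1 IH1|a1 IH1] /= [<-|Hb] Hc //; right.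
- by move: Hb; rewrite !List.in_app_iff => -[/IH1|/IH2]; auto.
- exact: IH1 Hb Hc.
- exact: IH1 Hb Hc.
- exact: IH1 Hb Hc.
Qed.

Lemma base_sub t : List.In (base t) (sub t).
Proof. by elim: t => [p|a _ b _|a _|a _|a IH] /=; try (left; done); right. Qed.

Lemma layer_sub k t s : layer k t -> (odepth s <= odepth t)%N ->
  List.In s (sub (base t)) -> layer k s.
Proof.
move=> [Hd Ht] Hs Hsub; split; first by lia.
exact: sub_trans Ht (sub_trans Hsub (base_sub s)).
Qed.

Lemma layer_and k a b : layer k (And a b) -> layer k a /\ layer k b.
Proof.
move=> H; split; apply: (layer_sub H); rewrite /= ?List.in_app_iff; try lia.
- by right; left; apply: sub_refl.
- by right; right; apply: sub_refl.
Qed.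

Lemma layer_neg k a : layer k (Neg a) -> layer k a.
Proof. by move=> H; apply: (layer_sub H) => //; right; apply: sub_refl. Qed.

Lemma layer_box k a : layer k (Box a) -> layer k a.
Proof. by move=> H; apply: (layer_sub H) => //; right; apply: sub_refl. Qed.

Lemma layer_nexts k i t : layer k (nexts i t) <-> layer (k + i) t.
Proof. by rewrite /layer odepth_nexts base_nexts addnA. Qed.

Lemma layer_next k a : layer k (Next a) -> layer k.+1 a /\ (k < depth)%N.
Proof.
move=> H; split; first by move: (proj1 (layer_nexts k 1 a) H); rewrite addn1.
by case: H => /= H _; lia.
Qed.

Lemma layer_top : layer 0 phi.
Proof. by split; [rewrite add0n | exact: base_sub]. Qed.

Definition closure_list :=
  List.flat_map (fun c => List.map (fun j => nexts j c) (List.seq 0 depth.+1)) (sub phi).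
Definition layer_list k := List.filter (fun t => (k + odepth t <= depth)%N) closure_list.
Definition width := length closure_list.

Lemma layer_listP k t : List.In t (layer_list k) <-> layer k t.
Proof.
rewrite /layer_list List.filter_In /closure_list List.in_flat_map; split.
- move=> [[c [Hc /List.in_map_iff [j [<- Hj]]]] Hd]; split => //.
  by rewrite base_nexts; apply: sub_trans Hc (base_sub c).
- move=> [Hd Hb]; split => //; exists (base t); split => //.
  apply/List.in_map_iff; exists (lead t); split; first exact: nexts_lead_base.
  by apply/List.in_seq; have := lead_le t; lia.
Qed.

Lemma layer_list_length k : (length (layer_list k) <= width)%N.
Proof. by apply/leP; apply: List.filter_length_le. Qed.

End Layers.

Section Types.
Variables (PV : Type) (p0 : PV) (phi : formula PV).
Implicit Types (a b c t : formula PV) (G D : formula PV -> bool).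
Local Notation layer := (layer phi).
Local Notation depth := (depth phi).

Definition desc k G := bigAnd p0 (List.map (lit G) (layer_list phi k)).

Definition ktype k G := Con (desc k G) /\ (forall t, ~ layer k t -> G t = false).

Definition shift i G t := G (nexts i t).

Lemma desc_lit k G t : layer k t -> GLC (Imp (desc k G) (lit G t)).
Proof.
by move=> /layer_listP H; apply: bigAnd_in; apply/List.in_map_iff; exists t.
Qed.

Lemma ktype_support k G t : ktype k G -> G t -> layer k t.
Proof. by move=> [_ N] Gt; apply: contrapT => /N Ht; rewrite Ht in Gt. Qed.

Lemma desc_true k G a t : Con (And a (desc k G)) -> layer k t ->
  GLC (Imp (And a (desc k G)) t) -> G t.
Proof.
move=> Ca Ht Hat; have := desc_lit G Ht; rewrite /lit.
by case: (G t) => // H; exfalso; apply: Ca; apply: (taut_mp2 _ Hat H); taut.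
Qed.

Lemma desc_false k G a t : Con (And a (desc k G)) -> layer k t ->
  GLC (Imp (And a (desc k G)) (Neg t)) -> G t = false.
Proof.
move=> Ca Ht Hat; have := desc_lit G Ht; rewrite /lit.
by case: (G t) => // H; exfalso; apply: Ca; apply: (taut_mp2 _ Hat H); taut.
Qed.

Lemma ktype_and k G a b : ktype k G -> layer k (And a b) -> G (And a b) = G a && G b.
Proof.
move=> [C _] H; have [Ha Hb] := layer_and H.
move: (desc_lit G H) (desc_lit G Ha) (desc_lit G Hb); rewrite /lit.
by case: (G (And a b)); case: (G a); case: (G b) => // H1 H2 H3; exfalso; apply: C;
  apply: (taut_mp3 _ H1 H2 H3); taut.
Qed.

Lemma ktype_neg k G a : ktype k G -> layer k (Neg a) -> G (Neg a) = ~~ G a.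
Proof.
move=> [C _] H; move: (desc_lit G H) (desc_lit G (layer_neg H)); rewrite /lit.
by case: (G (Neg a)); case: (G a) => // H1 H2; exfalso; apply: C;
  apply: (taut_mp2 _ H1 H2); taut.
Qed.

Lemma desc_future k i G : GLC (Imp (desc k G) (nexts i (desc (k + i) (shift i G)))).
Proof.
apply: nexts_bigAnd_intro => x /List.in_map_iff [t [<- /layer_listP Ht]].
have := desc_lit G (proj2 (layer_nexts _ _ _ _) Ht); rewrite /lit /shift.
by case: (G (nexts i t)) => // H; apply: imp_trans H (nexts_neg2 _ _).
Qed.

Lemma ktype_shift k i G : ktype k G -> ktype (k + i) (shift i G).
Proof.
move=> HG; split; last by move=> t Ht; apply: (proj2 HG) => /layer_nexts.
exact: con_nexts (con_imp (proj1 HG) (desc_future k i G)).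
Qed.

Lemma extend_to_ktype k a : Con a -> exists G, ktype k G /\ Con (And a (desc k G)).
Proof.
move=> /(lindenbaum p0 (layer_list phi k)) [G0 CG0].
pose G t := G0 t && `[< layer k t >].
have descG : desc k G = desc k G0.
  rewrite /desc; congr bigAnd; apply: List.map_ext_in => t /layer_listP Ht.
  by rewrite /lit /G asboolT // andbT.
exists G; rewrite /ktype descG; split => //; split; first exact: con_imp CG0 (and_er _ _).
by move=> t Ht; rewrite /G asboolF // andbF.
Qed.

Definition accessible G D := forall c, G (Box c) -> D c /\ D (Box c).

Definition box_bodies j :=
  List.flat_map (fun t => match t with Box c => [:: c] | _ => [::] end) (layer_list phi j).
Definition core j G :=
  bigAnd p0 (List.map (fun c => And c (Box c)) (List.filter (fun c => G (Box c)) (box_bodies j))).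

Lemma box_bodiesP j c : List.In c (box_bodies j) <-> layer j (Box c).
Proof.
rewrite /box_bodies List.in_flat_map -layer_listP; split.
- by move=> [t [Ht Hc]]; case: t Ht Hc => // a Ha [<-|//].
- by move=> H; exists (Box c); split => //; left.
Qed.

Lemma core_in j G c : G (Box c) -> layer j (Box c) -> GLC (Imp (core j G) (And c (Box c))).
Proof.
move=> Gc Hc; apply: bigAnd_in; apply/List.in_map_iff; exists c; split => //.
by apply/List.filter_In; split => //; apply/box_bodiesP.
Qed.

(* By axiom 4, a description forces its core in every successor. *)
Lemma desc_box_core j G : GLC (Imp (desc j G) (Box (core j G))).
Proof.
apply: box_bigAnd_intro => x /List.in_map_iff [c [<- /List.filter_In [/box_bodiesP Hc Gc]]].
have := desc_lit G Hc; rewrite /lit Gc => H.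
by apply: (taut_mp3 _ H (ax_4 c) (box_and c (Box c))); taut.
Qed.

(* [succ_invariant k G] holds at every successor of a world of type G: each
   future either repeats G's future or inherits its boxed formulas. *)
Definition succ_invariant k G := bigAnd p0 (List.map (fun i =>
    Or (nexts i (desc (k + i) (shift i G))) (nexts i (core (k + i) (shift i G))))
  (List.seq 1 (depth - k))).

Lemma desc_box_invariant k G : GLC (Imp (desc k G) (Box (succ_invariant k G))).
Proof.
apply: box_bigAnd_intro => x /List.in_map_iff [i [<- _]].
set E := desc (k + i) (shift i G); set c := core (k + i) (shift i G).
have Hnow : GLC (Imp (desc k G) (nexts i (Or E c))).
  by apply: imp_trans (desc_future k i G) _; apply: nexts_mono; apply: ax_taut; taut.
have Hlater : GLC (Imp (desc k G) (nexts i (Box (Or E c)))).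
  apply: imp_trans (desc_future k i G) _; apply: nexts_mono.
  by apply: imp_trans (desc_box_core _ _) _; apply: box_mono; apply: ax_taut; taut.
have Hbox : GLC (Imp (desc k G) (Box (nexts i (Or E c)))).
  by apply: (taut_mp3 _ Hnow Hlater (nexts_C i (Or E c))); taut.
exact: imp_trans Hbox (box_mono (nexts_or _ _ _)).
Qed.

Lemma desc_refutes_future k i G D t : layer (k + i) t -> G (nexts i t) != D (nexts i t) ->
  GLC (Imp (desc k D) (Neg (nexts i (desc (k + i) (shift i G))))).
Proof.
move=> Ht GD; have Hkt := proj2 (layer_nexts _ _ _ _) Ht.
have := desc_lit (shift i G) Ht; rewrite /lit /shift => /(nexts_mono i) HE.
have := desc_lit D Hkt; rewrite /lit.
case: (G (nexts i t)) (D (nexts i t)) GD HE => -[] // _ HE HD.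
- by apply: (taut_mp2 _ HE HD); taut.
- by apply: (taut_mp3 _ HE HD (nexts_neg1 i t)); taut.
Qed.

Lemma invariant_future k i G D : ktype k G -> ktype k D -> (0 < i)%N -> (k + i <= depth)%N ->
  Con (And (succ_invariant k G) (desc k D)) ->
  shift i G = shift i D \/ accessible (shift i G) (shift i D).
Proof.
move=> HG HD i0 ikn C.
have [E|NE] := pselect (forall t, layer (k + i) t -> G (nexts i t) = D (nexts i t)).
  left; apply: funext => t; have [Ht|Ht] := pselect (layer (k + i) t); first exact: E.
  by rewrite /shift (proj2 HG) ?(proj2 HD) // => /layer_nexts.
right; move/existsNP: NE => [t /not_implyP [Ht /eqP Hne]].
have Hinv : GLC (Imp (succ_invariant k G) (Or (nexts i (desc (k + i) (shift i G)))
                                             (nexts i (core (k + i) (shift i G))))).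
  by apply: bigAnd_in; apply/List.in_map_iff; exists i; split => //; apply/List.in_seq; lia.
have Hcore : GLC (Imp (And (succ_invariant k G) (desc k D)) (nexts i (core (k + i) (shift i G)))).
  by apply: (taut_mp2 _ Hinv (desc_refutes_future Ht Hne)); taut.
move=> c Gc; have Hc : layer (k + i) (Box c) by apply/layer_nexts; apply: ktype_support HG Gc.
have Hcc := imp_trans Hcore (imp_trans (nexts_mono i (core_in Gc Hc)) (nexts_and2 _ _ _)).
split; apply: (desc_true C).
- by apply/layer_nexts; apply: layer_box Hc.
- exact: imp_trans Hcc (and_el _ _).
- by apply/layer_nexts.
- exact: imp_trans Hcc (and_er _ _).
Qed.

(* The existence lemma: a world of type G refuting []psi has an accessible
   world of the same time refuting psi while satisfying []psi (Loeb), whose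
   futures are related to those of G as in [invariant_future]. *)
Lemma successor_exists k G psi : ktype k G -> layer k (Box psi) -> G (Box psi) = false ->
  exists D, [/\ ktype k D, D (Box psi), D psi = false, accessible G D &
    forall i, (0 < i)%N -> (k + i <= depth)%N ->
      shift i G = shift i D \/ accessible (shift i G) (shift i D)].
Proof.
move=> HG Hpsi Gpsi.
set g := And (core k G) (And (Neg psi) (Box psi)).
set seed := And g (succ_invariant k G).
have Hseed : GLC (Imp (desc k G) (Dia seed)).
  have := desc_lit G Hpsi; rewrite /lit Gpsi => Hnb.
  have Hg : GLC (Imp (desc k G) (Dia g)).
    by apply: (taut_mp3 _ (desc_box_core k G) Hnb (lob_dia (core k G) psi)); taut.
  by apply: (taut_mp3 _ (desc_box_invariant k G) Hg (box_dia_and (succ_invariant k G) g)); taut.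
have [D [HD C]] := extend_to_ktype k (con_dia (con_imp (proj1 HG) Hseed)).
have seed_true t : layer k t -> GLC (Imp seed t) -> D t.
  by move=> Ht H; apply: (desc_true C Ht); apply: imp_trans (and_el _ _) H.
exists D; split => //.
- by apply: seed_true => //; apply: ax_taut; taut.
- by apply: (desc_false C (layer_box Hpsi)); apply: ax_taut; taut.
- move=> c Gc; have Hc := ktype_support HG Gc.
  have Hcc : GLC (Imp seed (And c (Box c))).
    by apply: imp_trans (core_in Gc Hc); apply: ax_taut; taut.
  split; apply: seed_true; [exact: layer_box Hc | exact: imp_trans Hcc (and_el _ _)
                           | exact: Hc | exact: imp_trans Hcc (and_er _ _)].
- move=> i i0 ikn; apply: (invariant_future HG HD i0 ikn).
  by apply: (con_imp C); apply: ax_taut; taut.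
Qed.

End Types.

Section States.
Variables (PV : Type) (p0 : PV) (phi : formula PV).
Implicit Types (a t : formula PV) (G D : formula PV -> bool).
Local Notation layer := (layer phi).
Local Notation depth := (depth phi).
Local Notation ktype := (ktype p0 phi).

(* A state of the canonical model: a time k, a k-type, and heights, where
   height i measures the position of the i-th iterate in the order [acc]. *)
Record state := St { time : nat; typ : formula PV -> bool; height : nat -> nat }.

(* The number of layer-k boxes a type does not satisfy; each step up the
   accessibility order makes a new box true, which bounds the heights. *)
Definition isBox t := if t is Box _ then true else false.
Definition unboxed k G := count (fun t => isBox t && ~~ G t) (layer_list phi k).
Definition height_bound k := (k.+1 * width phi)%N.

Definition wf_state x := [/\ (time x <= depth)%N, ktype (time x) (typ x),
  (forall i, height x i.+1 <= height x i)%N,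
  (forall i, depth - time x < i -> height x i = 0)%N &
  (height x 0 + unboxed (time x) (typ x) <= height_bound (time x))%N].

Definition step x := if (time x < depth)%N
  then St (time x).+1 (shift 1 (typ x)) (fun i => height x i.+1) else x.

Lemma unboxed_le k G : (unboxed k G <= width phi)%N.
Proof. exact: leq_trans (count_size _ _) (layer_list_length phi k). Qed.

Lemma wf_step x : wf_state x -> wf_state (step x).
Proof.
rewrite /step; case: ifP => // kn [H1 H2 H3 H4 H5]; split => //=.
- by rewrite -addn1; apply: ktype_shift.
- by move=> i Hi; apply: H4; lia.
- have := unboxed_le (time x).+1 (shift 1 (typ x)); have := H3 0.
  by move: H5; rewrite /height_bound mulSn; lia.
Qed.

Lemma iter_step x i : (time x + i <= depth)%N ->
  iter i step x = St (time x + i) (shift i (typ x)) (fun j => height x (i + j)).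
Proof.
elim: i => [|i IH] H; first by case: x {H} => k G c /=; rewrite addn0.
rewrite iterS IH; last by lia.
rewrite /step /=; case: ifP => [_|]; last by lia.
congr St; first by rewrite addnS.
- by apply: funext => t; rewrite /shift -nextsSr.
- by apply: funext => j; rewrite addSnnS.
Qed.

Definition weak_acc u v := u = v \/ (accessible (typ u) (typ v) /\ (height u 0 < height v 0)%N).
Definition acc x y := [/\ time x = time y, accessible (typ x) (typ y),
  (height x 0 < height y 0)%N &
  forall i, (0 < i)%N -> (time x + i <= depth)%N -> weak_acc (iter i step x) (iter i step y)].

Lemma accessible_trans G D E : accessible G D -> accessible D E -> accessible G E.
Proof. by move=> H1 H2 c /H1 [_ /H2 [? ?]]. Qed.

Lemma weak_acc_trans u v w : weak_acc u v -> weak_acc v w -> weak_acc u w.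
Proof.
move=> [->|[H1 H2]] // [<-|[H3 H4]]; first by right.
by right; split; [apply: accessible_trans H1 H3 | apply: ltn_trans H2 H4].
Qed.

Lemma acc_trans x y z : acc x y -> acc y z -> acc x z.
Proof.
move=> [l1 c1 s1 w1] [l2 c2 s2 w2]; split.
- by rewrite l1.
- exact: accessible_trans c1 c2.
- exact: ltn_trans s1 s2.
- by move=> i i0 H; apply: weak_acc_trans (w1 i i0 H) (w2 i i0 _); rewrite -l1.
Qed.

Lemma acc_irr x : ~ acc x x.
Proof. by move=> [_ _]; rewrite ltnn. Qed.

Lemma acc_step x y : acc x y -> step x = step y \/ acc (step x) (step y).
Proof.
move=> [l1 c1 s1 w1].
case kn: (time x < depth)%N; last by right; rewrite /step -l1 kn.
have tx : time (step x) = (time x).+1 by rewrite /step kn.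
case: (w1 1 isT _) => [|E|[Hc Hs]]; [by rewrite addn1 | by left | right; split => //].
- by rewrite tx /step -l1 kn.
- by move=> i i0 H; rewrite -!iterSr; apply: w1 => //; move: H; rewrite tx; lia.
Qed.

Lemma shift_eqD i j G D : shift i G = shift i D -> shift (i + j) G = shift (i + j) D.
Proof. by move=> E; apply: funext => t; rewrite /shift nextsD -!/(shift i _ _) E. Qed.

Lemma unboxed_lt k G D a : accessible G D -> layer k (Box a) -> G (Box a) = false ->
  D (Box a) -> (unboxed k D < unboxed k G)%N.
Proof.
move=> GD /layer_listP; rewrite /unboxed.
have sub t : isBox t && ~~ D t -> isBox t && ~~ G t.
  by case: t => //= c /negP Dc; apply/negP => /GD [].
elim: (layer_list phi k) => //= t l IH [->|Hl] Ga Da /=.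
- by rewrite Ga Da /= add0n ltnS; apply: sub_count.
- rewrite -addnS; apply: leq_add (IH Hl Ga Da).
  by case: (isBox t && ~~ D t) (sub t) => [/(_ isT) ->|].
Qed.

(* Lifting a successor type D of G (from [successor_exists]) to a point
   above x: heights grow by one exactly where the futures differ. *)
Section Successor.
Variables (k : nat) (G D : formula PV -> bool) (h : nat -> nat).
Hypothesis wf_x : wf_state (St k G h).
Hypothesis D_type : ktype k D.
Hypothesis GD : accessible G D.
Hypothesis GD_future : forall i, (0 < i)%N -> (k + i <= depth)%N ->
  shift i G = shift i D \/ accessible (shift i G) (shift i D).

Definition succ_height i := if i == 0 then (h 0).+1 else if (depth - k < i)%N then 0 else
  if `[< shift i G = shift i D >] then h i else (h i).+1.

Definition succ_state := St k D succ_height.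

Lemma wf_succ_state a : layer k (Box a) -> G (Box a) = false -> D (Box a) -> wf_state succ_state.
Proof.
case: wf_x => /= kn _ hS h0 hB; move=> Ha Ga Da; split => //=.
- case=> [|i]; rewrite /succ_height /=.
    by case: ifP => _ //; case: asboolP => _; have := hS 0; lia.
  case: ifP => [//|H1]; rewrite (_ : (depth - k < i.+1) = false); last by lia.
  case: asboolP => E2; case: asboolP => E1; have := hS i.+1; try lia.
  by exfalso; apply: E2; rewrite -addn1; apply: shift_eqD.
- by move=> i H; rewrite /succ_height; case: ifP => [/eqP E|_]; [lia | rewrite H].
- by have := unboxed_lt GD Ha Ga Da; rewrite /succ_height /=; move: hB; lia.
Qed.

Lemma acc_succ_state : acc (St k G h) succ_state.
Proof.
case: wf_x => /= kn _ hS h0 hB; split => //=.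
move=> i i0 H; rewrite !iter_step //=.
have [E|NE] := pselect (shift i G = shift i D).
- left; congr St => //; apply: funext => j; rewrite /succ_height; case: ifP => [/eqP|_]; first by lia.
  case: ifP => [H2|H2]; first by rewrite h0.
  by rewrite asboolT //; apply: shift_eqD.
- right; split; first by case: (GD_future i0 H).
  rewrite /= /succ_height addn0.
  have -> : (i == 0) = false by lia.
  have -> : (depth - k < i) = false by lia.
  by rewrite asboolF.
Qed.

End Successor.

Lemma acc_refuting x a : wf_state x -> layer (time x) (Box a) -> typ x (Box a) = false ->
  exists y, [/\ wf_state y, acc x y & typ y a = false].
Proof.
case: x => k G h wf_x /= Ha Ga; have [/= _ HG _ _ _] := wf_x.
have [D [HD Da Dna GD GD_future]] := successor_exists HG Ha Ga.
exists (succ_state k G D h); split => //.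
- exact: (wf_succ_state wf_x HD GD Ha Ga Da).
- exact: (acc_succ_state wf_x GD GD_future).
Qed.

Lemma wf_height_le x i : wf_state x -> (height x i <= height_bound depth)%N.
Proof.
move=> [kn _ hS _ hB].
have hi : (height x i <= height x 0)%N by elim: i => // i IH; apply: leq_trans (hS i) IH.
apply: leq_trans hi (leq_trans (leq_trans (leq_addr _ _) hB) _).
by rewrite /height_bound leq_mul2r ltnS kn orbT.
Qed.

Lemma wf_state_ext x y : wf_state x -> wf_state y -> time x = time y ->
  (forall t, List.In t (layer_list phi (time x)) -> typ x t = typ y t) ->
  (forall i, (i <= depth)%N -> height x i = height y i) -> x = y.
Proof.
case: x y => [k G h] [k' G' h'] [/= _ HG _ h0 _] [/= _ HG' _ h0' _] /= Ek EG Eh; subst k'.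
congr St; apply: funext.
- move=> t; have [Ht|Ht] := pselect (List.In t (layer_list phi k)); first exact: EG.
  have Nt : ~ layer k t by move/layer_listP.
  by rewrite (proj2 HG t Nt) (proj2 HG' t Nt).
- by move=> i; have [/Eh -> //|Hi] := leqP i depth; rewrite h0 ?h0'; lia.
Qed.
End States.

Section CanonicalModel.
Variables (PV : Type) (p0 : PV) (phi : formula PV).
Local Notation depth := (depth phi).
Local Notation layer := (layer phi).

Definition world := {x : state PV | wf_state p0 phi x}.
Definition acc_world (u v : world) := acc phi (sval u) (sval v).
Definition canon := upsets acc_world.

Definition canon_step (w : canon) : canon := exist _ (step phi (sval w)) (wf_step (proj2_sig w)).
Definition canon_val (p : PV) : set canon := fun w => typ (sval w) (Var p).

Lemma world_eq (u v : world) : sval u = sval v -> u = v.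
Proof. by case: u v => x Hx [y Hy] /= E; subst y; congr exist; apply: Prop_irrelevance. Qed.

Lemma acc_world_trans (u v w : world) : acc_world u v -> acc_world v w -> acc_world u w.
Proof. exact: acc_trans. Qed.

Lemma acc_world_irr (u : world) : ~ acc_world u u.
Proof. exact: acc_irr. Qed.

(* The dynamics preserves or collapses [acc], so it is continuous. *)
Lemma canon_continuous : continuous canon_step.
Proof.
apply: continuous_upsets => u v /acc_step [E|]; last by right.
by left; apply: world_eq.
Qed.

(* The height of a state is bounded and strictly increases along [acc]. *)
Lemma canon_scattered : scattered canon.
Proof.
apply: (@scattered_upsets _ _ (fun w : world => height (sval w) 0) (height_bound phi depth)).
- by move=> w; apply: wf_height_le (proj2_sig w).
- by move=> u v [].
- exact: acc_world_trans.
Qed.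

(* Finiteness: a world is coded by its time, its choices on the layer list
   and its bounded heights up to [depth]. *)
Definition code (w : world) :
    'I_depth.+1 * {ffun 'I_(width phi) -> bool} * {ffun 'I_depth.+1 -> 'I_(height_bound phi depth).+1} :=
  (inord (time (sval w)),
   [ffun i : 'I_(width phi) => typ (sval w) (List.nth i (layer_list phi (time (sval w))) phi)],
   [ffun i : 'I_depth.+1 => inord (height (sval w) i)]).

Lemma code_inj : injective code.
Proof.
move=> [x Wx] [y Wy] [/(congr1 val)] /=; have [kx _ _ _ _] := Wx; have [ky _ _ _ _] := Wy.
rewrite !inordK ?ltnS // => Et Etyp Eh; apply: world_eq; apply: (wf_state_ext Wx Wy Et) => /=.
- move=> t /(List.In_nth _ _ phi) [j [Hj <-]].
  have Hj' : (j < width phi)%N.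
    by apply: (leq_trans _ (layer_list_length phi (time x))); apply/ltP.
  by have := congr1 (fun g : {ffun _ -> bool} => g (Ordinal Hj')) Etyp; rewrite !ffunE /= Et.
- move=> i Hi; have := congr1 (fun g : {ffun _ -> _} => val (g (inord i))) Eh.
  by rewrite !ffunE /= !inordK ?ltnS //; [exact: wf_height_le Wy | exact: wf_height_le Wx].
Qed.

Lemma canon_finite : finite_set [set: canon].
Proof. exact: finite_setT_inj code_inj. Qed.

Lemma world_ktype (w : world) : ktype p0 phi (time (sval w)) (typ (sval w)).
Proof. by have [] := proj2_sig w. Qed.

Lemma canon_step_time (w : canon) : (time (sval w) < depth)%N ->
  sval (canon_step w) = St (time (sval w)).+1 (shift 1 (typ (sval w))) (fun i => height (sval w) i.+1).
Proof. by rewrite /= /step => ->. Qed.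

Lemma truth_lemma t (w : canon) : layer (time (sval w)) t ->
  (truth canon_step canon_val t w <-> typ (sval w) t).
Proof.
elim: t w => [p|a IHa b IHb|a IHa|a IHa|a IHa] w H /=; have Tw := world_ktype w.
- by [].
- have [Ha Hb] := layer_and H; rewrite (ktype_and Tw H).
  split => [[/IHa -/(_ Ha) -> /IHb -/(_ Hb) ->]//|/andP [Ta Tb]].
  by split; [apply/IHa | apply/IHb].
- have Ha := layer_neg H; rewrite (ktype_neg Tw H).
  split => [Na|/negP Na Ta]; last by apply: Na; apply/IHa.
  by apply/negP => Da; apply: Na; apply/IHa.
- have Ha := layer_box H; rewrite (cderiv_upsets _ _ acc_world_trans acc_world_irr).
  split => [Nd|Db [v [[Et Acc _ _] Nv]]].
  + apply: contrapT => /negP/negbTE Nb; apply: Nd.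
    have [y [Wy Axy ya]] := acc_refuting (proj2_sig w) H Nb.
    exists (exist _ y Wy); split => // Ta.
    have Hy : layer (time y) a by case: Axy => <-.
    by have := proj1 (IHa (exist _ y Wy) Hy) Ta; rewrite ya.
  + by apply: Nv; apply/IHa; [rewrite -Et | exact: (proj1 (Acc a Db))].
- have [Ha kn] := layer_next H.
  by rewrite (IHa (canon_step w)) canon_step_time.
Qed.

End CanonicalModel.

Lemma refuting_world (PV : Type) (p0 : PV) (phi : formula PV) : ~ GLC phi ->
  exists w : canon p0 phi, time (sval w) = 0 /\ typ (sval w) phi = false.
Proof.
move=> NP; have C : Con (Neg phi) by move=> H; apply: NP; apply: (taut_mp _ H); taut.
have [G [HG CG]] := extend_to_ktype p0 phi 0 C.
have W : wf_state p0 phi (St 0 G (fun _ => 0)).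
  by split => //=; have := unboxed_le phi 0 G; rewrite /height_bound mul1n.
by exists (exist _ _ W); split => //=; apply: (desc_false CG (layer_top phi) (and_el _ _)).
Qed.

Theorem mainTheorem7 (PV : Type) (inhPV : inhabited PV) (phi : formula PV) :
  GLC phi <->
  (forall (X : topologicalType) (f : X -> X),
      continuous f -> finite_set [set: X] -> scattered X -> valid_on f phi).
Proof.
split => [Hphi X f cf _ sc nu | Hvalid].
  by apply/seteqP; split => // x _; apply: soundness.
case: inhPV => p0; apply: contrapT => /(refuting_world p0) [w [w0 wphi]].
have := Hvalid _ _ (@canon_continuous _ p0 phi) (@canon_finite _ p0 phi)
  (@canon_scattered _ p0 phi) (@canon_val _ p0 phi).
move=> /(congr1 (fun A => A w)); rewrite /= propeqE => -[_ /(_ I)].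
by rewrite truth_lemma ?wphi // w0; apply: layer_top.
Qed.
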